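(* Let $G$ be a finite connected unweighted graph with graph distance $d$, fix a vertex $r$, and let $(a.b)_r=\tfrac12(d(a,r)+d(b,r)-d(a,b))$. For distinct vertices $x,y$ let $f(x,y)=\max_{x=w_1,\dots,w_k=y}\min_{1\le i\le k-1}(w_i.w_{i+1})_r$ (maximum over all finite vertex sequences from $x$ to $y$), and set $f(x,x)=d(x,r)$. Define $d'(x,y)=d(x,r)+d(y,r)-2f(x,y)$ and $(x.y)'_r=\tfrac12\big(d'(x,r)+d'(y,r)-d'(x,y)\big)$. Then: (1) $(x.y)'_r=f(x,y)$ for all vertices $x,y$; (2) $d'(x,y)=0$ (i.e. $x$ and $y$ are mapped to the same vertex of Gromov's distance approximating tree) if and only if $d(x,r)=d(y,r)=m$ for some $m$ and there exists a path $x=w_1,w_2,\dots,w_p=y$ in $G$ such that $d(w_i,r)\ge m$ for all $i$ and $\max\{d(w_i,r),d(w_{i+1},r)\}>m$ for all $1\le i\le p-1$.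
   Context: Gromov's distance approximating tree identifies two vertices $x,y$ of $G$ exactly when $d'(x,y)=0$, where $d'$ is as defined in the claim. *)

From mathcomp Require Import all_boot all_order all_algebra.
Set Implicit Arguments. Unset Strict Implicit. Unset Printing Implicit Defensive.
Import Order.TTheory GRing.Theory Num.Theory.

(* A finite simple (unweighted) graph: vertex type T : finType with a
   symmetric irreflexive adjacency relation e. *)

Definition walk_len (T : finType) (e : rel T) (x y : T) (n : nat) : bool :=
  [exists p : n.-tuple T, path e x p && (last x p == y)].

(* graph distance: least length of a walk from x to y.  In a connected graph
   a shortest walk has length < #|T|, so the minimum below is exact. *)
Definition gdist (T : finType) (e : rel T) (x y : T) : nat :=
  \big[minn/#|T|]_(n < #|T| | walk_len e x y n) (n : nat).

Local Open Scope ring_scope.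

Definition gprod (T : finType) (e : rel T) (r a b : T) : rat :=
  ((gdist e a r)%:R + (gdist e b r)%:R - (gdist e a b)%:R) / 2%:R.

(* min_{i} g(w_i, w_{i+1}) along the sequence x :: s (s nonempty);
   value on s = [::] is irrelevant (0). *)
Fixpoint chain_min (T : Type) (g : T -> T -> rat) (x : T) (s : seq T) : rat :=
  match s with
  | [::] => 0
  | [:: y] => g x y
  | y :: s' => Num.min (g x y) (chain_min g y s')
  end.

Definition is_maxmin_f (T : finType) (e : rel T) (r : T) (f : T -> T -> rat) : Prop :=
  (forall x y : T, x != y ->
     (exists s : seq T, s != [::] /\ last x s = y /\ chain_min (gprod e r) x s = f x y) /\
     (forall s : seq T, s != [::] -> last x s = y -> chain_min (gprod e r) x s <= f x y)) /\
  (forall x : T, f x x = (gdist e x r)%:R).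

Definition dprime (T : finType) (e : rel T) (r : T) (f : T -> T -> rat) (x y : T) : rat :=
  (gdist e x r)%:R + (gdist e y r)%:R - 2%:R * f x y.

Definition gprod' (T : finType) (e : rel T) (r : T) (f : T -> T -> rat) (x y : T) : rat :=
  (dprime e r f x r + dprime e r f y r - dprime e r f x y) / 2%:R.

From mathcomp Require Import all_boot all_order all_algebra.
From mathcomp Require Import zify ring lra.
Import Order.TTheory GRing.Theory Num.Theory.
Set Implicit Arguments. Unset Strict Implicit.

(* The Gromov product (a.b)_r lies between 0 and min(d(a,r), d(b,r)), hence so
   does f; in particular f(x,r) = 0, so d'(x,r) = d(x,r) and (1) is arithmetic.
   For (2), d'(x,y) = 0 means f(x,y) = d(x,r) = d(y,r) = m.  A sequence whose
   consecutive Gromov products are all >= m refines, by replacing every step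
   with a geodesic, into a path of G staying at distance >= m from r whose edges
   each reach beyond m; conversely every such edge has Gromov product >= m,
   because d(a,r) + d(b,r) >= 2m + 1 = 2m + d(a,b). *)

Section GraphDistance.
Variables (T : finType) (e : rel T).

Lemma shorten_walk x p : path e x p ->
  exists q, [/\ path e x q, last x q = last x p, (size q <= size p)%N
              & (size q < #|T|)%N].
Proof.
case/shortenP=> q eq /andP[xNq uq] sub_q; exists q; split=> //.
  exact: uniq_leq_size.
have /card_uniqP card_xq : uniq (x :: q) by rewrite /= xNq.
by have := max_card (mem (x :: q)); rewrite card_xq.
Qed.

Lemma gdist_le_size x y p : path e x p -> last x p = y -> (gdist e x y <= size p)%N.
Proof.
move=> /shorten_walk[q [eq <- le_qp lt_qT]] <-; apply: leq_trans le_qp.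
have walk_q : walk_len e x (last x q) (Ordinal lt_qT).
  by apply/existsP; exists (in_tuple q); rewrite /= eq eqxx.
exact: (bigmin_le_cond _ (fun n : 'I_#|T| => n : nat) walk_q).
Qed.

Lemma gdist_xx x : gdist e x x = 0%N.
Proof. by apply/eqP; rewrite -leqn0; apply: (@gdist_le_size x x [::]). Qed.

Lemma gdist_edge x y : e x y -> (gdist e x y <= 1)%N.
Proof. by move=> exy; apply: (@gdist_le_size x y [:: y]); rewrite //= exy. Qed.

Hypothesis e_conn : forall x y : T, connect e x y.

Lemma gdist_walk x y :
  exists p, [/\ path e x p, last x p = y & size p = gdist e x y].
Proof.
have [p0 /shorten_walk[p [ep <- _ lt_pT]] ->] := connectP (e_conn x y).
have walk_p : walk_len e x (last x p) (Ordinal lt_pT).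
  by apply/existsP; exists (in_tuple p); rewrite /= ep eqxx.
rewrite /gdist -minEnat.
have [n walk_n ->] := eq_bigmin _ (fun n : 'I_#|T| => walk_len e x (last x p) n)
  (fun n => n : nat) walk_p (fun n _ => ltnW (ltn_ord n)).
case/existsP: walk_n => q /andP[eq /eqP lq].
by exists q; rewrite size_tuple.
Qed.

Lemma gdist_triangle x y z : (gdist e x z <= gdist e x y + gdist e y z)%N.
Proof.
have [p [ep lp <-]] := gdist_walk x y; have [q [eq lq <-]] := gdist_walk y z.
by rewrite -size_cat; apply: gdist_le_size; rewrite ?cat_path ?last_cat lp ?ep ?eq.
Qed.

Hypothesis e_sym : symmetric e.

Lemma gdist_sym x y : gdist e x y = gdist e y x.
Proof.
suff le_gdist a b : (gdist e a b <= gdist e b a)%N by apply/eqP; rewrite eqn_leq !le_gdist.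
have [p [ep lp <-]] := gdist_walk b a.
have rev_ep : path e a (rev (belast b p)).
  by rewrite -lp rev_path; apply: sub_path ep => u v; rewrite e_sym.
apply: leq_trans (gdist_le_size rev_ep _) _; last by rewrite size_rev size_belast.
by case/lastP: p lp {ep rev_ep} => [<-|q z _] //; rewrite belast_rcons rev_cons last_rcons.
Qed.

Variable r : T.

Definition high_edge (m : nat) (a b : T) : bool :=
  e a b && (m < maxn (gdist e a r) (gdist e b r))%N.

Lemma geodesic_high_walk m a b p : path e a p -> last a p = b ->
  (2 * m + size p <= gdist e a r + gdist e b r)%N ->
  path (high_edge m) a p && all (fun w => m <= gdist e w r)%N (a :: p).
Proof.
elim: p a => [|z p IHp] a /=; first by move=> _ <-; rewrite andbT; lia.
move=> /andP[eaz ep] lp len_ab.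
have d_ba : (gdist e b a <= (size p).+1)%N.
  by rewrite gdist_sym; apply: (@gdist_le_size a b (z :: p)); rewrite //= eaz.
have d_bz : (gdist e b z <= size p)%N by rewrite gdist_sym; apply: gdist_le_size.
have d_az := gdist_edge eaz; have tri_az := gdist_triangle a z r.
have tri_ba := gdist_triangle b a r; have tri_bz := gdist_triangle b z r.
have /andP[-> /= /andP[m_z ->]] := IHp z ep lp ltac:(lia).
by rewrite /high_edge eaz m_z andbT /=; lia.
Qed.

End GraphDistance.

Local Open Scope ring_scope.

Section ChainMin.
Variables (U : eqType) (g : U -> U -> rat).

Lemma le_chain_min (c : rat) x s : s != [::] ->
  (c <= chain_min g x s) = path (fun a b => c <= g a b) x s.
Proof.
elim: s x => [|y [|z s] IHs] x //= _; first by rewrite andbT.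
by rewrite le_min IHs.
Qed.

Lemma chain_min_le_ends (h : U -> rat) x s :
  (forall a b, g a b <= h a) -> (forall a b, g a b <= h b) -> s != [::] ->
  chain_min g x s <= h x /\ chain_min g x s <= h (last x s).
Proof.
move=> le_gl le_gr; elim: s x => [|y [|z s] IHs] x //= _.
by have [le_y le_last] := IHs y isT; rewrite !ge_min le_gl le_last orbT.
Qed.

End ChainMin.

Section GromovProduct.
Variables (T : finType) (e : rel T) (r : T).
Hypothesis e_sym : symmetric e.
Hypothesis e_conn : forall x y : T, connect e x y.

Lemma gprod_ge_natE (m : nat) a b : (m%:R <= gprod e r a b) =
  (2 * m + gdist e a b <= gdist e a r + gdist e b r)%N.
Proof.
by rewrite /gprod ler_pdivlMr ?ltr0n // lerBrDr -!natrM -!natrD ler_nat mulnC.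
Qed.

Lemma gprod_ge0 a b : 0 <= gprod e r a b.
Proof.
have := gprod_ge_natE 0 a b; rewrite mulr0n => ->.
by have := gdist_triangle e_conn a r b; rewrite (gdist_sym e_conn e_sym r b); lia.
Qed.

Lemma gprod_le_l a b : gprod e r a b <= (gdist e a r)%:R.
Proof.
rewrite /gprod ler_pdivrMr ?ltr0n // lerBlDr -!natrM -!natrD ler_nat.
by have := gdist_triangle e_conn b a r; rewrite (gdist_sym e_conn e_sym b a); lia.
Qed.

Lemma gprod_le_r a b : gprod e r a b <= (gdist e b r)%:R.
Proof.
rewrite /gprod ler_pdivrMr ?ltr0n // lerBlDr -!natrM -!natrD ler_nat.
by have := gdist_triangle e_conn a b r; lia.
Qed.

Lemma gprod_xx a : gprod e r a a = (gdist e a r)%:R.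
Proof. by rewrite /gprod gdist_xx subr0; field. Qed.

Lemma gprod_chain_high_walk (m : nat) x s :
  path (fun a b => m%:R <= gprod e r a b) x s -> (m <= gdist e x r)%N ->
  exists p, [/\ path (high_edge e r m) x p, last x p = last x s
              & all (fun w => m <= gdist e w r)%N (x :: p)].
Proof.
elim: s x => [|y s IHs] x /=; first by move=> _ m_x; exists [::]; rewrite /= m_x.
move=> /andP[]; rewrite gprod_ge_natE => m_xy ey m_x.
have [q [eq lq len_q]] := gdist_walk e_conn x y; rewrite -len_q in m_xy.
have /andP[hq m_xq] := geodesic_high_walk e_conn e_sym eq lq m_xy.
have [|p [hp lp m_p]] := IHs y ey.
  by have := gdist_triangle e_conn x y r; lia.
exists (q ++ p); rewrite cat_path last_cat lq hq hp lp /= all_cat.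
by move: m_p m_xq => /= /andP[_ ->] /andP[-> ->].
Qed.

Lemma high_walk_gprod_chain (m : nat) x p :
  path (high_edge e r m) x p -> all (fun w => m <= gdist e w r)%N (x :: p) ->
  path (fun a b => m%:R <= gprod e r a b) x p.
Proof.
elim: p x => //= z p IHp x /andP[/andP[exz m_xz] hp] /and3P[m_x m_z m_p].
rewrite IHp ?m_z // andbT gprod_ge_natE.
by have := gdist_edge exz; lia.
Qed.

Variable f : T -> T -> rat.
Hypothesis hf : is_maxmin_f e r f.

Lemma maxmin_f_le a b : f a b <= (gdist e a r)%:R /\ f a b <= (gdist e b r)%:R.
Proof.
have [f_max f_xx] := hf; have [->|ab] := eqVneq a b; first by rewrite f_xx.
have [[s [s_nil [<- <-]]] _] := f_max a b ab.
exact: chain_min_le_ends gprod_le_l gprod_le_r s_nil.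
Qed.

Lemma le_maxmin_f c a b : c <= f a b <->
  exists s, [/\ s != [::], last a s = b & path (fun u v => c <= gprod e r u v) a s].
Proof.
have [f_max f_xx] := hf; have [<-|ab] := eqVneq a b.
  rewrite f_xx; split=> [c_a|[s [s_nil _ cs]]].
    by exists [:: a]; rewrite /= gprod_xx c_a.
  have [+ _] := chain_min_le_ends a gprod_le_l gprod_le_r s_nil.
  by apply: le_trans; rewrite le_chain_min.
have [[s [s_nil [ls <-]]] s_max] := f_max a b ab.
split=> [c_f|[t [t_nil lt ct]]]; first by exists s; rewrite -le_chain_min.
by apply: le_trans (s_max t t_nil lt); rewrite le_chain_min.
Qed.

Lemma maxmin_f_ge0 a b : 0 <= f a b.
Proof. by apply/le_maxmin_f; exists [:: b]; rewrite /= gprod_ge0. Qed.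

Lemma maxmin_f_root a : f a r = 0.
Proof.
apply/le_anti; rewrite maxmin_f_ge0 andbT.
by have [_] := maxmin_f_le a r; rewrite gdist_xx.
Qed.

Lemma le_maxmin_f_high_walk (m : nat) a b : m%:R <= f a b <->
  exists p, path (high_edge e r m) a p /\ last a p = b /\
            all (fun w => m <= gdist e w r)%N (a :: p).
Proof.
split=> [m_f | [[|z p] [hp [lp m_p]]]].
- have [s [_ ls cs]] := (le_maxmin_f m%:R a b).1 m_f.
  have [|p [hp lp m_p]] := gprod_chain_high_walk cs.
    by rewrite -(ler_nat rat); apply: le_trans m_f (maxmin_f_le a b).1.
  by exists p; rewrite lp ls.
- by have [_ f_xx] := hf; rewrite -lp f_xx ler_nat; case/andP: m_p.
- by apply/le_maxmin_f; exists (z :: p); rewrite high_walk_gprod_chain.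
Qed.

Lemma gprod'_maxmin a b : gprod' e r f a b = f a b.
Proof. by rewrite /gprod' /dprime !maxmin_f_root gdist_xx; field. Qed.

Lemma dprime_eq0 a b : dprime e r f a b = 0 <->
  gdist e a r = gdist e b r /\ (gdist e a r)%:R <= f a b.
Proof.
have [le_fa le_fb] := maxmin_f_le a b; rewrite /dprime; split=> [d0 | [dab le_af]].
  have fa : (gdist e a r)%:R = f a b by lra.
  have fb : (gdist e b r)%:R = f a b by lra.
  by rewrite fa lexx; split=> //; apply/eqP; rewrite -(eqr_nat rat) fa fb.
by rewrite -dab in le_fb *; lra.
Qed.

End GromovProduct.

Theorem mainTheorem2 (T : finType) (e : rel T)
  (e_sym : symmetric e) (e_irr : irreflexive e)
  (e_conn : forall x y : T, connect e x y)
  (r : T) (f : T -> T -> rat) (hf : is_maxmin_f e r f) :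
  (forall x y : T, gprod' e r f x y = f x y) /\
  (forall x y : T,
     dprime e r f x y = 0 <->
     exists m : nat,
       gdist e x r = m /\ gdist e y r = m /\
       exists p : seq T,
         path (fun a b => e a b && (m < maxn (gdist e a r) (gdist e b r))%N) x p /\
         last x p = y /\
         all (fun w => (m <= gdist e w r)%N) (x :: p)).
Proof.
split=> x y; first exact: gprod'_maxmin.
rewrite (dprime_eq0 e_sym e_conn hf).
split=> [[dxy /(le_maxmin_f_high_walk e_sym e_conn hf) walk] | [m [dx [dy walk]]]].
  by exists (gdist e x r); rewrite -dxy.
by rewrite dx dy; split=> //; apply/(le_maxmin_f_high_walk e_sym e_conn hf).
Qed.
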